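(* Let $C_2$ denote the 2-chain. Then \[ [C_2 \odot C_2]' = \Big\{ \textstyle\bigsqcup_{i=1}^{n} C_2 : n \ge 2 \Big\} \cup \{ X_n : n \ge 3 \}, \] i.e. the posets $P$ with $P \oslash' C_2 \cong C_2$ and $P\not\cong C_2$ are exactly the parallel compositions (disjoint unions with elements of different copies incomparable) of $n\ge2$ copies of the 2-chain and the $n$-crown posets $X_n$ with $n\ge3$.
   Context: $C_2=\{x<y\}$. The $n$-crown $X_n$ has elements $a_1,\dots,a_n,b_1,\dots,b_n$ with relations exactly $a_i<b_j$ for $i\ne j$. Notation for a poset $P$: $J^-(a)=\{c:c\le a\}$, $J^+(a)=\{c:a\le c\}$; $\ell(X)$ is the cardinality of a longest chain of a poset $X$. A subset $A$ of a poset $X$ is maximally ordered in $X$ if $|\{(a,b)\in A\times A:a<b\}|$ is maximal among subsets of $X$ of cardinality $|A|$. $A\subseteq P$ is linked if for all $a<b$ in $A$, either $b$ covers $a$ or there exists $c\in J^+(a)\cap J^-(b)$ with $c\in A$. For $\sigma\in\mathrm{Aut}(P)$, $\Sigma(\sigma)=\{a:\sigma(a)\ne a\}$. For finite $Q$ and $r\ge2$: $\sigma\in\mathrm{Aut}(P)$ is a $(Q,r)$-generator if there exist subsets $S_0,\dots,S_{r-1}\subset\Sigma(\sigma)$, each isomorphic to $Q$, which are smallest maximally ordered subsets of $\Sigma(\sigma)$ with $\sigma(S_i)=S_{(i+1)\bmod r}$, $\ell(S_i)=\ell(\Sigma(\sigma))$, $\bigcup_iS_i=\Sigma(\sigma)$;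 distinct $S_i,S_j$ are $(Q,r)$-symmetric subsets. Elements $a,b$ are $(Q,r,0)$-symmetric if $a=b$; $(Q,r,1)$-symmetric if there are $(Q,r)$-symmetric subsets $A,B$ with generator $\sigma$, $a\in A$, $b=\sigma^q(a)\in B$, $1\le q<r$; for $n\ge2$, $(Q,r,n)$-symmetric if not $(Q,r,j)$-symmetric for $j<n$ but there exist $c$, $j<n$ with $a$ $(Q,r,j)$-symmetric to $c$ and $c$ $(Q,r,n-j)$-symmetric to $b$; $(Q,r)$-symmetric if $(Q,r,n)$-symmetric for some $n\ge0$ (an equivalence relation). The retract $P\oslash_rQ$ is the quotient poset of the equivalence classes with $E\le F$ iff some $e\in E$, $f\in F$ satisfy $e\le f$. For a linked subset $A\cong Q$, the $(Q,r)$-symmetry group of $A$ is the largest subgroup of $\mathrm{Aut}(P)$ of $(Q,r)$-generators whose action fixes every $b\in P$ to which no $a\in A$ is $(Q,r)$-symmetric; the $(Q,r)$-symmetry set of $A$ is the set of elements not fixed by this group. The $(Q,r)$-symmetry of a $(Q,r)$-symmetry set $S$ is composite if there exist a finite poset $\hat Q$, $\hat r\ge2$ and a $(\hat Q,\hat r)$-symmetry set $\hat S\subseteq S$ with either $\hat Q$ a proper subposet of $Q$, or $\hat Q=Q$ and $\hat r<r$; it is prime otherwise. $P\oslash'_rQ$ is the retraction using only prime $(Q,r)$-symmetries, and $[R\odot_rQ]'=\{P:P\oslash'_rQ\cong R,\ P\not\cong R\}$; for $r=2$ the index is dropped. *)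

From HB Require Import structures.
From Stdlib Require Import Relations.
From mathcomp Require Import all_boot all_order fingroup perm.
From mathcomp Require Import boolp.

Set Implicit Arguments.
Unset Strict Implicit.
Unset Printing Implicit Defensive.

Definition partial_order (T : Type) (le : rel T) : Prop :=
  [/\ reflexive le, antisymmetric le & transitive le].

(* Isomorphism between the induced subposet (D2, R') of W and the induced
   subposet (D1, R) of U: an order embedding g of D2 onto D1. *)
Definition iso_sub (U W : finType) (D1 : {set U}) (R : rel U)
    (D2 : {set W}) (R' : rel W) : Prop :=
  exists g : W -> U,
    [/\ {in D2 &, injective g}, g @: D2 = D1
      & {in D2 &, forall v w, R' v w = R (g v) (g w)}].

Section Basic.
Variables (T : finType) (le : rel T).

Definition ltP (x y : T) := (x != y) && le x y.

Definition covers (a b : T) := ltP a b && [forall c, ~~ (ltP a c && ltP c b)].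

Definition linked (A : {set T}) :=
  [forall a in A, forall b in A,
     ltP a b ==> (covers a b || [exists c in A, ltP a c && ltP c b])].

Definition is_chain (C : {set T}) := [forall x in C, forall y in C, le x y || le y x].

Definition ell (X : {set T}) :=
  \max_(C : {set T} | (C \subset X) && is_chain C) #|C|.

Definition npairs (A : {set T}) :=
  #|[set p : T * T | [&& p.1 \in A, p.2 \in A & ltP p.1 p.2]]|.

Definition max_ordered (X A : {set T}) :=
  (A \subset X) &&
  [forall B : {set T}, ((B \subset X) && (#|B| == #|A|)) ==> (npairs B <= npairs A)].

Definition is_aut (s : {perm T}) := [forall x, forall y, le (s x) (s y) == le x y].

Definition Sigma (s : {perm T}) := [set a | s a != a].

Definition gen_family (s : {perm T}) (r : nat) (F : nat -> {set T}) : Prop :=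
  [/\ (forall i, i < r -> max_ordered (Sigma s) (F i)),
      (forall i, i < r -> [set s x | x in F i] = F (i.+1 %% r)),
      (forall i, i < r -> ell (F i) = ell (Sigma s))
    & \bigcup_(i < r) F i = Sigma s].

End Basic.

Inductive in_gen (T : finType) (G : {perm T} -> Prop) : {perm T} -> Prop :=
  | in_gen_one : in_gen G 1%g
  | in_gen_el s : G s -> in_gen G s
  | in_gen_mul s t : in_gen G s -> in_gen G t -> in_gen G (s * t)%g
  | in_gen_inv s : in_gen G s -> in_gen G (s^-1)%g.

Section Sym.
Variables (T : finType) (le : rel T) (V : finType) (leQ : rel V).
(* Q is the induced subposet (DQ, leQ) of V *)

Definition QFam (DQ : {set V}) (r : nat) (s : {perm T}) (F : nat -> {set T}) : Prop :=
  [/\ gen_family le s r F,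
      (forall i, i < r -> iso_sub (F i) le DQ leQ)
    & (forall G, gen_family le s r G -> forall i, i < r -> #|F i| <= #|G i|)].

Definition generator (DQ : {set V}) (r : nat) (s : {perm T}) : Prop :=
  is_aut le s /\ exists F, QFam DQ r s F.

Definition step_by (DQ : {set V}) (r : nat) (s : {perm T}) (a b : T) : Prop :=
  exists F, QFam DQ r s F /\
    exists i j q, [/\ (i < r) && (j < r), F i != F j, a \in F i, b \in F j
                      & (0 < q < r) /\ b = (s ^+ q)%g a].

Definition step (DQ : {set V}) (r : nat) (a b : T) : Prop :=
  exists s, generator DQ r s /\ step_by DQ r s a b.

(* (Q,r)-symmetric = (Q,r,n)-symmetric for some n *)
Definition sym (DQ : {set V}) (r : nat) : T -> T -> Prop :=
  clos_refl_trans T (step DQ r).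

Definition symgen (DQ : {set V}) (r : nat) (A : {set T}) (s : {perm T}) : Prop :=
  generator DQ r s /\
  forall b, (forall a, a \in A -> ~ sym DQ r a b) -> s b = b.

Definition symset (DQ : {set V}) (r : nat) (A : {set T}) (b : T) : Prop :=
  exists g, in_gen (symgen DQ r A) g /\ g b != b.

Definition composite (DQ : {set V}) (r : nat) (A : {set T}) : Prop :=
  exists (DQ' : {set V}) (r' : nat) (A' : {set T}),
    [/\ (2 <= r') && linked le A', iso_sub A' le DQ' leQ,
        (exists b, symset DQ' r' A' b),
        (forall b, symset DQ' r' A' b -> symset DQ r A b)
      & (DQ' \proper DQ \/ (DQ' = DQ /\ r' < r))].

Definition pstep (DQ : {set V}) (r : nat) (a b : T) : Prop :=
  exists A, [/\ linked le A, iso_sub A le DQ leQ, ~ composite DQ r A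
              & exists s, symgen DQ r A s /\ step_by DQ r s a b].

Definition psym (DQ : {set V}) (r : nat) : T -> T -> Prop :=
  clos_refl_trans T (pstep DQ r).

Definition classes (E : T -> T -> Prop) : {set {set T}} :=
  [set [set y | `[< E x y >]] | x : T].

Definition qle (E1 E2 : {set T}) : bool := [exists e in E1, exists f in E2, le e f].

Definition prime_retract_iso (DQ : {set V}) (r : nat) (W : finType) (R : rel W) : Prop :=
  iso_sub (classes (psym DQ r)) qle [set: W] R.

End Sym.

Definition c2le : rel bool := fun x y => x ==> y.

Definition in_odot_C2_C2 (T : finType) (le : rel T) : Prop :=
  prime_retract_iso le c2le [set: bool] 2 c2le /\ ~ iso_sub [set: T] le [set: bool] c2le.

Definition par_le (n : nat) : rel ('I_n * bool) :=
  fun x y => (x.1 == y.1) && (x.2 ==> y.2).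

(* n-crown: a_i = (i,false), b_i = (i,true), a_i < b_j iff i <> j *)
Definition crown_le (n : nat) : rel ('I_n * bool) :=
  fun x y => (x == y) || [&& ~~ x.2, y.2 & x.1 != y.1].

Arguments par_le : clear implicits.
Arguments crown_le : clear implicits.

(* Every prime (C2,2)-symmetry is generated by an involutive automorphism s exchanging a
   comparable pair u < v with a second pair s u < s v and fixing everything else, so prime
   symmetric elements are conjugate under Aut(P).

   If P ⊘' C2 ≅ C2, the two classes L0 (below) and L1 (above) are thus antichains on which
   Aut(P) acts transitively, and all comparabilities go from L0 to L1; as P ≇ C2, some prime
   symmetry with generator s exists.  Two elements of L0 with the same up-set cannot exist:
   their transposition would be an automorphism whose one-point symmetry makes that prime
   symmetry composite; in particular u is not below s v.  A generator acts on L1 as a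
   transposition, and conjugating these shows that every transposition of L1 maps up-sets of
   elements of L0 to up-sets of elements of L0.  Hence the up-set of u in L1 is either {v} or
   L1 minus s v, transitivity spreads this to all of L0, and matching each element of L0 with
   the element of L1 defining its up-set gives n parallel chains or the crown X_n.

   Conversely, in these posets exchanging two indices is a (C2,2)-generator, so the symmetry
   classes are the two levels; no symmetry is composite because an automorphism moving a point
   moves a comparable pair, so its support cannot be covered by copies of a one-point poset. *)

From Pilot Require Import Defs.
From Stdlib Require Import Relations.
From mathcomp Require Import all_boot all_order fingroup perm boolp.

Set Implicit Arguments.
Unset Strict Implicit.
Unset Printing Implicit Defensive.

Notation QFamC2 le := (QFam le c2le [set: bool] 2).
Notation step_byC2 le := (step_by le c2le [set: bool] 2).
Notation symC2 le := (sym le c2le [set: bool] 2).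
Notation pstepC2 le := (pstep le c2le [set: bool] 2).
Notation psymC2 le := (psym le c2le [set: bool] 2).

Lemma imset_setT_bool (U : finType) (g : bool -> U) :
  [set g x | x in [set: bool]] = [set g false; g true].
Proof.
apply/setP => z; rewrite !inE; apply/imsetP/orP.
- by case=> [[]] _ ->; rewrite eqxx; [right|left].
- by case=> /eqP ->; [exists false|exists true].
Qed.

Lemma imset_set2 (T U : finType) (f : T -> U) a b :
  [set f x | x in [set a; b]] = [set f a; f b].
Proof. by rewrite imsetU1 imset_set1. Qed.

Lemma bigcup_ord2 (T : finType) (F : nat -> {set T}) :
  \bigcup_(i < 2) F i = F 0 :|: F 1.
Proof. by rewrite !big_ord_recl big_ord0 setU0. Qed.

Lemma in_gen_fixed (T : finType) (G : {perm T} -> Prop) b :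
  (forall s, G s -> s b = b) -> forall g, in_gen G g -> g b = b.
Proof.
move=> fixG g; elim=> [|s /fixG //|s t _ sb _ tb|s _ sb].
- by rewrite perm1.
- by rewrite permM sb tb.
- by rewrite -{1}sb permK.
Qed.

Lemma eq_iso_sub (U W : finType) (D1 : {set U}) R (D2 : {set W}) R1 R2 :
  R1 =2 R2 -> iso_sub D1 R D2 R2 -> iso_sub D1 R D2 R1.
Proof. by move=> eR [g [g_inj gD grel]]; exists g; split=> // v w vD wD; rewrite eR grel. Qed.

Section Poset.
Variables (T : finType) (le : rel T).
Hypothesis le_po : partial_order le.

Lemma po_refl x : le x x. Proof. by case: le_po. Qed.

Lemma po_anti x y : le x y -> le y x -> x = y.
Proof. by case: le_po => _ anti _ xy yx; apply: anti; rewrite xy yx. Qed.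

Lemma po_trans y x z : le x y -> le y z -> le x z.
Proof. by case: le_po => _ _ tr; apply: tr. Qed.

Lemma is_autP (s : {perm T}) : reflect (forall x y, le (s x) (s y) = le x y) (is_aut le s).
Proof.
apply: (iffP forallP) => [aut x y|aut x]; last by apply/forallP => y; rewrite aut.
by have /forallP/(_ y)/eqP := aut x.
Qed.

Lemma is_aut1 : is_aut le 1%g.
Proof. by apply/is_autP => x y; rewrite !perm1. Qed.

Lemma is_autM (s t : {perm T}) : is_aut le s -> is_aut le t -> is_aut le (s * t)%g.
Proof.
by move=> /is_autP s_aut /is_autP t_aut; apply/is_autP => x y; rewrite !permM t_aut s_aut.
Qed.

Lemma is_autV (s : {perm T}) : is_aut le s -> is_aut le (s^-1)%g.
Proof. by move=> /is_autP s_aut; apply/is_autP => x y; rewrite -s_aut !permKV. Qed.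

Lemma is_autX (s : {perm T}) n : is_aut le s -> is_aut le (s ^+ n)%g.
Proof.
move=> s_aut; elim: n => [|n IHn]; first by rewrite expg0 is_aut1.
by rewrite expgSr is_autM.
Qed.

Lemma ltP_aut (s : {perm T}) x y : is_aut le s -> Defs.ltP le (s x) (s y) = Defs.ltP le x y.
Proof. by move=> /is_autP s_aut; rewrite /Defs.ltP s_aut (inj_eq perm_inj). Qed.

(* x <= r x <= r^2 x <= ... is a chain, and it returns to x after #[r] steps. *)
Lemma aut_fixed_of_le (r : {perm T}) x : is_aut le r -> le x (r x) -> r x = x.
Proof.
move=> r_aut x_le_rx.
have chain k : le (r x) ((r ^+ k.+1)%g x).
  elim: k => [|k IHk]; first by rewrite expg1 po_refl.
  apply: po_trans IHk _.
  by rewrite (expgS r k.+1) permM (is_autP _ (is_autX k.+1 r_aut)).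
have := chain #[r]%g.-1; rewrite prednK ?order_gt0 // expg_order perm1 => rx_le_x.
exact: po_anti rx_le_x x_le_rx.
Qed.

Lemma aut_moved_above (t : {perm T}) x y : is_aut le t -> le x y -> ~~ le (t x) y -> t y != y.
Proof. by move=> /is_autP t_aut xy; apply: contraNneq => <-; rewrite t_aut. Qed.

Lemma aut_moved_below (t : {perm T}) x y : is_aut le t -> le x y -> ~~ le x (t y) -> t x != x.
Proof. by move=> /is_autP t_aut xy; apply: contraNneq => <-; rewrite t_aut. Qed.

Lemma is_chain1 x : is_chain le [set x].
Proof. by apply/forall_inP => a /set1P ->; apply/forall_inP => b /set1P ->; rewrite po_refl. Qed.

Lemma is_chain2 x y : le x y -> is_chain le [set x; y].
Proof.
move=> xy; apply/forall_inP => a /set2P ea; apply/forall_inP => b /set2P eb.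
by case: ea eb => -> [] ->; rewrite ?po_refl ?xy ?orbT.
Qed.

Lemma ell_leq_card (X : {set T}) : ell le X <= #|X|.
Proof. by apply/bigmax_leqP => C /andP [CX _]; apply: subset_leq_card. Qed.

Lemma chain_leq_ell (X C : {set T}) : C \subset X -> is_chain le C -> #|C| <= ell le X.
Proof. by move=> CX C_chain; apply: (leq_bigmax_cond C); rewrite CX C_chain. Qed.

Lemma ell_set1 x : ell le [set x] = 1.
Proof.
apply/anti_leq; rewrite -{1}(cards1 x) ell_leq_card.
by rewrite -{1}(cards1 x) chain_leq_ell ?is_chain1.
Qed.

Lemma ell_set2_incomparable x y : ~~ le x y -> ~~ le y x -> ell le [set x; y] = 1.
Proof.
move=> nxy nyx; apply/anti_leq/andP; split.
- apply/bigmax_leqP => C /andP [/subsetP CX /forall_inP C_chain].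
  apply/card_le1_eqP => a b aC bC; have /forall_inP/(_ b bC) := C_chain a aC.
  by case/set2P: (CX a aC) => ->; case/set2P: (CX b bC) => ->; rewrite ?(negbTE nxy) ?(negbTE nyx).
- by rewrite -(cards1 x) chain_leq_ell ?is_chain1 // sub1set !inE eqxx.
Qed.

Lemma npairs_card_le1 (B : {set T}) : #|B| <= 1 -> npairs le B = 0.
Proof.
move=> /card_le1_eqP B1; apply/eqP; rewrite cards_eq0; apply/eqP/setP => p.
rewrite !inE; apply/negbTE/and3P => -[p1B p2B /andP [/negP + _]].
by rewrite (B1 _ _ p1B p2B).
Qed.

Lemma npairs_card_le2 (B : {set T}) : #|B| <= 2 -> npairs le B <= 1.
Proof.
move=> B2; apply/card_le1_eqP => [[a1 b1]] [a2 b2]; rewrite !inE /= =>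
  /and3P [a1B b1B /andP [n1 l1]] /and3P [a2B b2B /andP [n2 l2]].
have inB c : c \in B -> (c == a1) || (c == b1).
  move=> cB; apply/contraTT: B2; rewrite negb_or -ltnNge => /andP [ca1 cb1].
  apply: leq_trans (subset_leq_card (_ : c |: [set a1; b1] \subset B)).
    by rewrite cardsU1 cards2 !inE (negbTE ca1) (negbTE cb1) n1.
  by apply/subsetP => z; rewrite !inE => /or3P [] /eqP ->.
case/orP: (inB _ a2B) => /eqP ea; case/orP: (inB _ b2B) => /eqP eb; subst.
- by rewrite eqxx in n2.
- by [].
- by rewrite (po_anti l1 l2) eqxx in n1.
- by rewrite eqxx in n2.
Qed.

Lemma npairs_set2_gt0 x y : Defs.ltP le x y -> 0 < npairs le [set x; y].
Proof.
by move=> xy; rewrite card_gt0; apply/set0Pn; exists (x, y); rewrite !inE /= !eqxx orbT xy.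
Qed.

Lemma max_ordered_pair (X A : {set T}) :
  A \subset X -> #|A| = 2 -> 0 < npairs le A -> max_ordered le X A.
Proof.
move=> AX A2 pairsA; rewrite /max_ordered AX; apply/forall_inP => B /andP [_ /eqP B2].
by apply: leq_trans pairsA; rewrite npairs_card_le2 // B2 A2.
Qed.

Lemma iso_C2P (A : {set T}) : iso_sub A le [set: bool] c2le ->
  exists x y, Defs.ltP le x y /\ A = [set x; y].
Proof.
move=> [g [g_inj gA grel]]; exists (g false), (g true); split; last by rewrite -gA imset_setT_bool.
rewrite /Defs.ltP -grel ?inE // andbT.
by apply/eqP => /g_inj; rewrite !inE => /(_ isT isT).
Qed.

End Poset.

Section C2Generators.
Variables (T : finType) (le : rel T).
Hypothesis le_po : partial_order le.

Lemma C2_family_shape s F : is_aut le s -> QFamC2 le s F ->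
  exists u v, [/\ Defs.ltP le u v, F 0 = [set u; v], F 1 = [set s u; s v],
                  involutive s & Sigma s = F 0 :|: F 1].
Proof.
move=> /is_autP s_aut [[_ sF ellF cupF] isoF _].
have [x [y [xy F0]]] := iso_C2P (isoF 0 erefl).
have [x_neq_y x_le_y] := andP xy.
have F1 : F 1 = [set s x; s y] by rewrite -(sF 0 erefl) F0 imset_set2.
have sSigma : Sigma s = F 0 :|: F 1 by rewrite -cupF bigcup_ord2.
have [ssx ssy] : s (s x) = x /\ s (s y) = y.
  have := sF 1 erefl; rewrite F1 imset_set2 F0 /= => F10.
  have ss_le : le (s (s x)) (s (s y)) by rewrite !s_aut.
  have ss_neq : s (s x) != s (s y) by rewrite !(inj_eq perm_inj).
  have : s (s x) \in [set x; y] by rewrite -F10 !inE eqxx.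
  have : s (s y) \in [set x; y] by rewrite -F10 !inE eqxx orbT.
  rewrite !inE => /orP [] /eqP e1 /orP [] /eqP e2; rewrite e1 e2 in ss_le ss_neq *;
    rewrite ?eqxx // in ss_neq.
  by rewrite (po_anti le_po x_le_y ss_le) eqxx in x_neq_y.
exists x, y; split=> // z; have [zS|] := boolP (z \in Sigma s); last first.
  by rewrite inE negbK => /eqP sz; rewrite !sz.
by move: zS; rewrite sSigma F0 F1 !inE => /orP [/orP [] | /orP []] /eqP ->; rewrite ?ssx ?ssy.
Qed.

Lemma C2_step_shape s a b : is_aut le s -> step_byC2 le s a b ->
  [/\ b = s a, s a != a & involutive s].
Proof.
move=> s_aut [F [QF [i [j [q [/andP [i2 _] _ aF _ [/andP [q0 q2] ->]]]]]]].
have -> : q = 1 by case: q q0 q2 => [|[|]].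
have [u [v [_ _ _ s_inv _]]] := C2_family_shape s_aut QF.
have : a \in Sigma s by case: QF => [[_ _ _ <-] _ _]; apply/bigcupP; exists (Ordinal i2).
by rewrite inE expg1.
Qed.

Lemma pstepC2_aut a b : pstepC2 le a b ->
  exists2 s : {perm T}, is_aut le s & [/\ b = s a, s a != a & involutive s].
Proof.
move=> [A [_ _ _ [s [[[s_aut _] _] sab]]]].
by exists s => //; apply: C2_step_shape.
Qed.

Lemma pstepC2_sym a b : pstepC2 le a b -> pstepC2 le b a.
Proof.
move=> [A [Alinked isoA primeA [s [s_gen sab]]]].
have s_aut : is_aut le s by case: s_gen => [[]].
have [bE _ s_inv] := C2_step_shape s_aut sab; subst b.
exists A; split=> //; exists s; split=> //.
move: sab => [F [QF [i [j [q [/andP [i2 j2] Fij aF bF _]]]]]].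
exists F; split=> //; exists j, i, 1; rewrite expg1 s_inv.
by split=> //; rewrite 1?eq_sym ?i2 ?j2.
Qed.

Lemma psymC2_sym a b : psymC2 le a b -> psymC2 le b a.
Proof.
elim=> [x y /pstepC2_sym|x|x y z _ yx _ zy]; [exact: rt_step|exact: rt_refl|].
exact: rt_trans zy yx.
Qed.

Lemma psymC2_aut a b : psymC2 le a b -> exists2 r : {perm T}, is_aut le r & r a = b.
Proof.
elim=> [x y /pstepC2_aut [s s_aut [-> _ _]]|x|x y z _ [r r_aut rx] _ [r' r'_aut r'y]].
- by exists s.
- by exists 1%g; rewrite ?perm1 ?is_aut1.
- by exists (r * r')%g; rewrite ?permM ?rx ?r'y ?is_autM.
Qed.

Lemma psymC2_sub_symC2 a b : psymC2 le a b -> symC2 le a b.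
Proof.
elim=> [x y [A [_ _ _ [s [[s_gen _] sxy]]]]|x|x y z _ xy _ yz].
- by apply: rt_step; exists s.
- exact: rt_refl.
- exact: rt_trans xy yz.
Qed.

End C2Generators.

(* [set true] is the one-point subposet of C2. *)
Section Twins.
Variables (T : finType) (le : rel T).
Hypothesis le_po : partial_order le.
Variables x x' : T.
Hypotheses (x_neq : x != x') (tperm_aut : is_aut le (tperm x x')).
Hypotheses (x_nle : ~~ le x x') (x'_nle : ~~ le x' x).

Lemma Sigma_tperm : Sigma (tperm x x') = [set x; x'].
Proof.
apply/setP => z; rewrite !inE.
case: tpermP => [->|->|/eqP zx /eqP zx']; rewrite ?eqxx ?orbT ?(negbTE zx) ?(negbTE zx') //.
by rewrite eq_sym x_neq.
Qed.

Let twin_family k := if k == 0 then [set x] else [set x'].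

Lemma twin_QFam : QFam le c2le [set true] 2 (tperm x x') twin_family.
Proof.
have ell_Sigma : ell le (Sigma (tperm x x')) = 1.
  by rewrite Sigma_tperm ell_set2_incomparable.
have family : gen_family le (tperm x x') 2 twin_family.
  split=> [i _||i _|].
  - rewrite /max_ordered Sigma_tperm.
    apply/andP; split; first by rewrite /twin_family; case: ifP; rewrite sub1set !inE eqxx ?orbT.
    apply/forall_inP => B /andP [_ /eqP cardB]; rewrite npairs_card_le1 // cardB.
    by rewrite /twin_family; case: ifP; rewrite cards1.
  - by case=> [|[|//]] _; rewrite /twin_family /= imset_set1 ?tpermL ?tpermR.
  - by rewrite ell_Sigma /twin_family; case: ifP; rewrite ell_set1.
  - by rewrite bigcup_ord2 Sigma_tperm.
split=> // [i _|G [_ _ ellG _] i i2].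
- exists (fun=> if i == 0 then x else x'); split; rewrite /twin_family.
  + by move=> a b /set1P -> /set1P ->.
  + by rewrite imset_set1; case: ifP.
  + by move=> a b /set1P -> /set1P ->; rewrite (po_refl le_po).
- have : 0 < ell le (G i) by rewrite ellG // ell_Sigma.
  by move/leq_trans/(_ (ell_leq_card le _)); rewrite /twin_family; case: ifP; rewrite cards1.
Qed.

Lemma twin_symset : exists b, symset le c2le [set true] 2 [set x] b.
Proof.
have swap_gen : generator le c2le [set true] 2 (tperm x x').
  by split=> //; exists twin_family; exact: twin_QFam.
exists x, (tperm x x'); split; last by rewrite tpermL eq_sym.
apply: in_gen_el; split=> // b b_asym.
have [bx|bx'|//] := tpermP x x' b.
- by case: (b_asym x); rewrite ?inE // bx; apply: rt_refl.
- case: (b_asym x); rewrite ?inE // bx'; apply: rt_step; exists (tperm x x'); split=> //.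
  exists twin_family; split; first exact: twin_QFam.
  exists 0, 1, 1; rewrite expg1 tpermL /twin_family /= !inE eqxx; split=> //.
  by apply/eqP => /setP /(_ x); rewrite !inE eqxx (negbTE x_neq).
Qed.

End Twins.

(* [bip_le true n] is [par_le n] and [bip_le false n] is [crown_le n]. *)
Definition bip_le (c : bool) (n : nat) : rel ('I_n * bool) :=
  fun v w => (v == w) || [&& ~~ v.2, w.2 & c == (v.1 == w.1)].
Arguments bip_le : clear implicits.

Lemma par_leE n : par_le n =2 bip_le true n.
Proof.
by case=> [i [|]] [j [|]]; rewrite /par_le /bip_le /= ?xpair_eqE ?andbT ?andbF ?orbF ?orbb.
Qed.

Lemma crown_leE n : crown_le n =2 bip_le false n.
Proof. by case=> [i [|]] [j [|]]; rewrite /crown_le /bip_le /= ?xpair_eqE. Qed.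

Lemma bip_le_FT c n i j : bip_le c n (i, false) (j, true) = (c == (i == j)).
Proof. by rewrite /bip_le /= xpair_eqE andbF. Qed.

(* The up-set of a in L1 is [set y] if c, and L1 :\ y otherwise. *)
Definition matched (T : finType) (le : rel T) (L1 : {set T}) (c : bool) (a y : T) :=
  forall z, z \in L1 -> le a z = (c == (z == y)).

Section MatchingIso.
Variables (T : finType) (le : rel T).
Hypothesis le_po : partial_order le.
Variables (L0 L1 : {set T}) (c : bool).
Hypothesis L01_cover : forall x, (x \in L0) || (x \in L1).
Hypothesis L01_disjoint : forall x, x \in L0 -> x \in L1 -> False.
Hypothesis L0_antichain : forall x y, x \in L0 -> y \in L0 -> le x y -> x = y.
Hypothesis L1_antichain : forall x y, x \in L1 -> y \in L1 -> le x y -> x = y.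
Hypothesis L1_nle_L0 : forall x y, x \in L1 -> y \in L0 -> le x y = false.
Hypothesis L0_matched : forall a, a \in L0 -> exists2 y, y \in L1 & matched le L1 c a y.
Hypothesis L1_matched : forall y, y \in L1 -> exists2 a, a \in L0 & matched le L1 c a y.
Hypothesis L0_separated : forall a a', a \in L0 -> a' \in L0 ->
  (forall z, z \in L1 -> le a z = le a' z) -> a = a'.

Let mate a := odflt a [pick y | (y \in L1) && [forall z in L1, le a z == (c == (z == y))]].

Let mateP a : a \in L0 -> mate a \in L1 /\ matched le L1 c a (mate a).
Proof.
move=> aL0; rewrite /mate; case: pickP => [y /andP [yL1 /forall_inP ay]|none] /=.
  by split=> // z zL1; apply/eqP/ay.
have [y yL1 ay] := L0_matched aL0; have /negP[] := none y.
by rewrite yL1; apply/forall_inP => z zL1; rewrite ay.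
Qed.

Let mate_uniq a y : a \in L0 -> y \in L1 -> matched le L1 c a y -> mate a = y.
Proof.
move=> aL0 yL1 ay; have [_ amate] := mateP aL0.
by have := amate y yL1; rewrite ay // eqxx; case: c; case: (y =P mate a).
Qed.

Let mate_inj : {in L0 &, injective mate}.
Proof.
move=> a a' aL0 a'L0 e; apply: L0_separated => // z zL1.
have [_ amate] := mateP aL0; have [_ a'mate] := mateP a'L0.
by rewrite amate // a'mate // e.
Qed.

Let mate_onto y : y \in L1 -> exists2 a, a \in L0 & mate a = y.
Proof. by move=> yL1; have [a aL0 ay] := L1_matched yL1; exists a => //; apply: mate_uniq. Qed.

Lemma card_L1_L0 : #|L1| = #|L0|.
Proof.
suff -> : L1 = mate @: L0 by apply: card_in_imset mate_inj.
apply/setP => y; apply/idP/imsetP => [/mate_onto [a aL0 <-]|[a aL0 ->]]; first by exists a.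
by have [] := mateP aL0.
Qed.

Lemma bipartite_iso : iso_sub [set: T] le [set: 'I_#|L0| * bool] (bip_le c #|L0|).
Proof.
pose ev (i : 'I_#|L0|) : T := enum_val i.
have evL0 i : ev i \in L0 := enum_valP i.
have ev_inj : injective ev := @enum_val_inj _ _.
have mateL1 i : mate (ev i) \in L1 by have [] := mateP (evL0 i).
exists (fun v => if v.2 then mate (ev v.1) else ev v.1); split.
- move=> [i [|]] [j [|]] _ _ /= e.
  + by rewrite (ev_inj _ _ (mate_inj (evL0 i) (evL0 j) e)).
  + by case: (L01_disjoint (evL0 j)); rewrite -e.
  + by case: (L01_disjoint (evL0 i)); rewrite e.
  + by rewrite (ev_inj _ _ e).
- apply/setP => x; rewrite !inE; apply/imsetP.
  case/orP: (L01_cover x) => [xL0|/mate_onto [a aL0 <-]].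
  + by exists (enum_rank_in xL0 x, false); rewrite ?inE // /= /ev enum_rankK_in.
  + by exists (enum_rank_in aL0 a, true); rewrite ?inE // /= /ev enum_rankK_in.
- move=> [i [|]] [j [|]] _ _; rewrite /bip_le /= ?xpair_eqE ?andbT ?andbF ?orbF /=.
  + apply/eqP/idP => [->|/L1_antichain]; first exact: po_refl le_po _.
    by move=> /(_ (mateL1 i) (mateL1 j)) /(mate_inj (evL0 i) (evL0 j)) /ev_inj ->.
  + by rewrite L1_nle_L0.
  + have [_ ->] := mateP (evL0 i); rewrite ?mateL1 //.
    by rewrite (inj_in_eq mate_inj) ?evL0 // (inj_eq ev_inj) (eq_sym j).
  + apply/eqP/idP => [->|/L0_antichain]; first exact: po_refl le_po _.
    by move=> /(_ (evL0 i) (evL0 j))/ev_inj ->.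
Qed.

End MatchingIso.

(* L0 and L1 are the two classes of P ⊘' C2, with L0 below L1 as witnessed by e <= f. *)
Section Levels.
Variables (T : finType) (le : rel T).
Hypothesis le_po : partial_order le.
Variables (L0 L1 : {set T}) (e f : T).
Hypothesis L01_cover : forall x, (x \in L0) || (x \in L1).
Hypothesis L0_psym : forall x y, x \in L0 -> y \in L0 -> psymC2 le x y.
Hypothesis L1_psym : forall x y, x \in L1 -> y \in L1 -> psymC2 le x y.
Hypothesis L1_nle_L0 : forall x y, x \in L1 -> y \in L0 -> le x y = false.
Hypotheses (eL0 : e \in L0) (fL1 : f \in L1) (e_le_f : le e f).

Lemma L01_disjoint x : x \in L0 -> x \in L1 -> False.
Proof. by move=> xL0 xL1; have := L1_nle_L0 xL1 xL0; rewrite (po_refl le_po). Qed.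

Lemma in_L1 x : (x \in L1) = (x \notin L0).
Proof.
apply/idP/idP => [xL1|xNL0]; first by apply/negP => /L01_disjoint/(_ xL1).
by have := L01_cover x; rewrite (negbTE xNL0).
Qed.

Lemma psym_antichain x y : psymC2 le x y -> le x y -> x = y.
Proof.
by move=> /(psymC2_aut le_po) [r r_aut <-] /(aut_fixed_of_le le_po r_aut) ->.
Qed.

Lemma L0_minimal x z : x \in L0 -> le z x -> z = x.
Proof.
move=> xL0 zx; have /orP [zL0|zL1] := L01_cover z; last by rewrite L1_nle_L0 in zx.
exact: psym_antichain (L0_psym zL0 xL0) zx.
Qed.

Lemma L1_maximal y z : y \in L1 -> le y z -> z = y.
Proof.
move=> yL1 yz; have /orP [zL0|zL1] := L01_cover z; first by rewrite L1_nle_L0 in yz.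
by rewrite (psym_antichain (L1_psym yL1 zL1) yz).
Qed.

Lemma L0E x : (x \in L0) = [exists y, Defs.ltP le x y].
Proof.
apply/idP/existsP => [xL0|[y /andP [xy x_le_y]]].
  have [r r_aut <-] := psymC2_aut le_po (L0_psym eL0 xL0).
  exists (r f); rewrite (ltP_aut _ _ r_aut) /Defs.ltP e_le_f andbT.
  by apply: contraTneq fL1 => <-; rewrite in_L1 eL0.
have /orP [//|xL1] := L01_cover x.
by rewrite (L1_maximal xL1 x_le_y) eqxx in xy.
Qed.

Lemma aut_L0 r x : is_aut le r -> (r x \in L0) = (x \in L0).
Proof.
move=> r_aut; rewrite !L0E; apply/existsP/existsP => [[y]|[y]].
  by rewrite -{1}(permKV r y) (ltP_aut _ _ r_aut); exists (r^-1 y)%g.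
by rewrite -(ltP_aut _ _ r_aut); exists (r y).
Qed.

Lemma aut_L1 r x : is_aut le r -> (r x \in L1) = (x \in L1).
Proof. by move=> r_aut; rewrite !in_L1 aut_L0. Qed.

Lemma ltP_L01 x y : Defs.ltP le x y -> x \in L0 /\ y \in L1.
Proof.
move=> xy; have xL0 : x \in L0 by rewrite L0E; apply/existsP; exists y.
split=> //; rewrite in_L1; apply/negP => yL0.
by case/andP: xy => /eqP xy /(L0_minimal yL0).
Qed.

Lemma leE a b : le a b = (a == b) || [&& a \in L0, b \in L1 & le a b].
Proof.
case: (eqVneq a b) => [->|ab]; first by rewrite (po_refl le_po).
rewrite /=; have [a_le_b|_] := boolP (le a b); last by rewrite !andbF.
by have [-> ->] : a \in L0 /\ b \in L1 by apply: ltP_L01; rewrite /Defs.ltP ab.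
Qed.

Lemma iso_C2_of_no_pstep : (forall a b, ~ pstepC2 le a b) -> iso_sub [set: T] le [set: bool] c2le.
Proof.
move=> no_step.
have psym_eq x y : psymC2 le x y -> x = y.
  by elim=> [x' y' /no_step|//|x' y' z' _ -> _ ->].
have e_neq_f : e != f by apply: contraTneq fL1 => <-; rewrite in_L1 eL0.
exists (fun b => if b then f else e); split.
- by move=> [] [] _ _ //= ef; rewrite ef eqxx in e_neq_f.
- rewrite imset_setT_bool; apply/setP => x; rewrite !inE.
  have /orP [xL0|xL1] := L01_cover x.
  + by rewrite -(psym_eq _ _ (L0_psym eL0 xL0)) eqxx.
  + by rewrite -(psym_eq _ _ (L1_psym fL1 xL1)) eqxx orbT.
- by move=> [] [] _ _ /=; rewrite ?(po_refl le_po) ?e_le_f ?L1_nle_L0.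
Qed.

Lemma tperm_L0_aut x x' : x \in L0 -> x' \in L0 ->
  (forall z, z \in L1 -> le x z = le x' z) -> is_aut le (tperm x x').
Proof.
move=> xL0 x'L0 same_up; apply/is_autP => a b.
have tperm_L0 w : (tperm x x' w \in L0) = (w \in L0).
  by case: tpermP => [->|->|//]; rewrite xL0 x'L0.
have tperm_L1 w : w \in L1 -> tperm x x' w = w.
  by rewrite in_L1 => wNL0; apply: tpermD; apply: contraNneq wNL0 => <-.
rewrite leE [RHS]leE (inj_eq perm_inj) tperm_L0; congr (_ || _).
rewrite [in LHS]in_L1 tperm_L0 -in_L1; case: (boolP (b \in L1)) => [bL1|_]; last by rewrite !andbF.
rewrite (tperm_L1 b bL1); case: (boolP (a \in L0)) => //= _.
by case: tpermP => [->|->|//]; rewrite same_up.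
Qed.

Definition upsets_stable (g : T -> T) := forall a, a \in L0 ->
  exists2 a', a' \in L0 & forall y, y \in L1 -> le a' y = le a (g y).

Lemma eq_upsets_stable g h : {in L1, g =1 h} -> upsets_stable g -> upsets_stable h.
Proof. by move=> gh g_st a /g_st [a' a'L0 a'g]; exists a' => // y yL1; rewrite a'g ?gh. Qed.

Lemma upsets_stable_comp g h : {in L1, forall y, h y \in L1} ->
  upsets_stable g -> upsets_stable h -> upsets_stable (g \o h).
Proof.
move=> hL1 g_st h_st a /g_st [a' /h_st [a'' a''L0 a''h] a'g].
by exists a'' => // y yL1; rewrite a''h // a'g ?hL1.
Qed.

Lemma upsets_stable_tperm1 y : upsets_stable (tperm y y).
Proof. by move=> a aL0; exists a => // x _; rewrite tperm1 perm1. Qed.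

Lemma upsets_stable_tperm_trans y w z : y \in L1 -> w \in L1 -> z \in L1 ->
  upsets_stable (tperm y w) -> upsets_stable (tperm w z) -> upsets_stable (tperm y z).
Proof.
move=> yL1 wL1 zL1 yw_st wz_st.
have [<-|yz] := eqVneq y z; first exact: upsets_stable_tperm1.
have [<-|wz] := eqVneq w z; first exact: yw_st.
have [->|yw] := eqVneq y w; first exact: wz_st.
have tpermL1 a b x : a \in L1 -> b \in L1 -> x \in L1 -> tperm a b x \in L1.
  by move=> aL1 bL1 xL1; case: tpermP.
apply: eq_upsets_stable (upsets_stable_comp _ yw_st (upsets_stable_comp _ wz_st yw_st)).
- (* tperm y z is the conjugate of tperm w z by tperm y w *)
  by move=> x _ /=; rewrite -(tpermJ_tperm wz yz) conjgE tpermC !permM tpermV.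
- by move=> x xL1; rewrite /= !tpermL1.
- by move=> x xL1; rewrite tpermL1.
Qed.

Lemma generator_upsets_stable t F y : is_aut le t -> QFamC2 le t F ->
  y \in L1 -> t y != y -> upsets_stable (tperm y (t y)).
Proof.
move=> t_aut QF yL1 ty_neq.
have [u' [v' [/ltP_L01 [u'L0 v'L1] F0 F1 t_inv]]] := C2_family_shape le_po t_aut QF.
rewrite F0 F1 => Sigma_t.
have moved_L1 z : z \in L1 -> t z != z -> (z == v') || (z == t v').
  move=> zL1 tz; have : z \in Sigma t by rewrite inE.
  rewrite Sigma_t !inE -orbA => /or4P [] /eqP zE; subst z; rewrite ?eqxx ?orbT //.
  - by case: (L01_disjoint u'L0).
  - by case: (L01_disjoint (_ : t u' \in L0) zL1); rewrite aut_L0.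
have t_on_L1 z : z \in L1 -> t z = tperm y (t y) z.
  move=> zL1; case: tpermP => [->|->|/eqP zy /eqP zty] //.
  apply/eqP/negPn/negP => tz.
  case/orP: (moved_L1 _ yL1 ty_neq) => /eqP yE; case/orP: (moved_L1 _ zL1 tz) => /eqP zE;
    by move: zy zty; rewrite yE zE ?t_inv ?eqxx.
move=> a aL0; exists (t a); first by rewrite aut_L0.
by move=> z zL1; rewrite -t_on_L1 // -{1}(t_inv z) (is_autP _ _ t_aut).
Qed.

Lemma L1_upsets_stable y z : y \in L1 -> z \in L1 -> upsets_stable (tperm y z).
Proof.
move=> yL1 zL1; have yz := clos_rt_rt1n _ _ _ _ (L1_psym yL1 zL1).
elim: yz yL1 zL1 => {y z} [y _ _|y w z [A [_ _ _ [t [[[t_aut [F QF]] _] t_step]]]] _ IHw yL1 zL1].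
  exact: upsets_stable_tperm1.
have [wE ty_neq _] := C2_step_shape le_po t_aut t_step; subst w.
have tyL1 : t y \in L1 by rewrite aut_L1.
apply: upsets_stable_tperm_trans (IHw tyL1 zL1) => //.
exact: generator_upsets_stable QF yL1 ty_neq.
Qed.

Lemma matched_aut r c a y : is_aut le r -> matched le L1 c a y -> matched le L1 c (r a) (r y).
Proof.
move=> r_aut ay z zL1.
rewrite -{1}(permKV r z) (is_autP _ _ r_aut) ay ?aut_L1 ?is_autV //.
by rewrite -(inj_eq (@perm_inj _ r)) permKV.
Qed.

Lemma bip_iso_of_matched c x0 y0 : x0 \in L0 -> y0 \in L1 -> matched le L1 c x0 y0 ->
  (forall x x', x \in L0 -> x' \in L0 -> (forall z, z \in L1 -> le x z = le x' z) -> x = x') ->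
  #|L1| = #|L0| /\ iso_sub [set: T] le [set: 'I_#|L0| * bool] (bip_le c #|L0|).
Proof.
move=> x0L0 y0L1 x0y0 L0_separated.
have L0_antichain x y : x \in L0 -> y \in L0 -> le x y -> x = y.
  by move=> xL0 yL0; apply: psym_antichain; apply: L0_psym.
have L1_antichain x y : x \in L1 -> y \in L1 -> le x y -> x = y.
  by move=> xL1 yL1; apply: psym_antichain; apply: L1_psym.
have L0_matched a : a \in L0 -> exists2 y, y \in L1 & matched le L1 c a y.
  move=> aL0; have [r r_aut <-] := psymC2_aut le_po (L0_psym x0L0 aL0).
  by exists (r y0); [rewrite aut_L1|apply: matched_aut].
have L1_matched y : y \in L1 -> exists2 a, a \in L0 & matched le L1 c a y.
  move=> yL1; have [r r_aut <-] := psymC2_aut le_po (L1_psym y0L1 yL1).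
  by exists (r x0); [rewrite aut_L0|apply: matched_aut].
split; first exact: card_L1_L0 L0_matched L1_matched L0_separated.
exact (bipartite_iso le_po L01_cover L01_disjoint L0_antichain L1_antichain
  L1_nle_L0 L0_matched L1_matched L0_separated).
Qed.

Section PrimeSymmetry.
Variables (A : {set T}) (s : {perm T}) (u v : T).
Hypotheses (A_iso : iso_sub A le [set: bool] c2le) (A_prime : ~ composite le c2le [set: bool] 2 A).
Hypotheses (s_aut : is_aut le s) (u_lt_v : Defs.ltP le u v) (s_inv : involutive s).
Hypothesis Sigma_s : Sigma s = [set u; v] :|: [set s u; s v].

Let uL0 : u \in L0. Proof. by case: (ltP_L01 u_lt_v). Qed.
Let vL1 : v \in L1. Proof. by case: (ltP_L01 u_lt_v). Qed.
Let suL0 : s u \in L0. Proof. by rewrite aut_L0. Qed.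
Let svL1 : s v \in L1. Proof. by rewrite aut_L1. Qed.
Let su_neq : s u != u.
Proof.
have : u \in Sigma s by rewrite Sigma_s !inE eqxx.
by rewrite inE.
Qed.
Let sv_neq : s v != v.
Proof.
have : v \in Sigma s by rewrite Sigma_s !inE eqxx orbT.
by rewrite inE.
Qed.
Let u_le_v : le u v. Proof. by case/andP: u_lt_v. Qed.

Let s_fixed z : z != u -> z != v -> z != s u -> z != s v -> s z = z.
Proof.
move=> zu zv zsu zsv; apply/eqP/negPn/negP => zS.
have : z \in Sigma s by rewrite inE.
by rewrite Sigma_s !inE (negbTE zu) (negbTE zv) (negbTE zsu) (negbTE zsv).
Qed.

Lemma symset_all b : symset le c2le [set: bool] 2 A b.
Proof.
have [x [y [/ltP_L01 [xL0 yL1] ->]]] := iso_C2P A_iso.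
have A_meets c : exists2 a, a \in [set x; y] & symC2 le a c.
  have /orP [cL0|cL1] := L01_cover c.
  + by exists x; [rewrite !inE eqxx|exact/psymC2_sub_symC2/L0_psym].
  + by exists y; [rewrite !inE eqxx orbT|exact/psymC2_sub_symC2/L1_psym].
have [b' bb' b_neq] : exists2 b', psymC2 le b b' & b != b'.
  have /orP [bL0|bL1] := L01_cover b.
  + have [-> | ?] := eqVneq b u; first by exists (s u); [exact: L0_psym|rewrite eq_sym].
    by exists u; first exact: L0_psym.
  + have [-> | ?] := eqVneq b v; first by exists (s v); [exact: L1_psym|rewrite eq_sym].
    by exists v; first exact: L1_psym.
case: (clos_rt_rt1n _ _ _ _ bb') b_neq => [|d z [A' [_ _ _ [t [[t_gen _] t_step]]]] _ _].
  by rewrite eqxx.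
have [_ tb _] := C2_step_shape le_po (proj1 t_gen) t_step.
exists t; split=> //; apply: in_gen_el; split=> // c c_asym.
by have [a aA ac] := A_meets c; case: (c_asym a aA ac).
Qed.

(* Twins in L0 would be exchanged by an automorphism whose one-point symmetry lies inside the
   symmetry set of A, which is everything. *)
Lemma L0_separated x x' : x \in L0 -> x' \in L0 ->
  (forall z, z \in L1 -> le x z = le x' z) -> x = x'.
Proof.
move=> xL0 x'L0 same_up; apply/eqP/negP => /negP x_neq; apply: A_prime.
have L0_nle y y' : y \in L0 -> y' \in L0 -> y != y' -> ~~ le y y'.
  by move=> yL0 y'L0; apply: contra => /(psym_antichain (L0_psym yL0 y'L0)) ->.
have x'_neq : x' != x by rewrite eq_sym.
have [b x_sym] := twin_symset le_po x_neq (tperm_L0_aut xL0 x'L0 same_up)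
  (L0_nle _ _ xL0 x'L0 x_neq) (L0_nle _ _ x'L0 xL0 x'_neq).
exists [set true], 2, [set x]; split=> //.
- apply/andP; split=> //; apply/forall_inP => a /set1P ->; apply/forall_inP => c /set1P ->.
  by rewrite /Defs.ltP eqxx.
- exists (fun=> x); split; rewrite ?imset_set1 //.
  + by move=> ? ? /set1P -> /set1P ->.
  + by move=> ? ? /set1P -> /set1P ->; rewrite (po_refl le_po).
- by exists b.
- by move=> c _; apply: symset_all.
- by left; apply/properP; split; [exact: subsetT|exists false; rewrite !inE].
Qed.

Let L1_neq_L0 z w : z \in L1 -> w \in L0 -> z != w.
Proof. by move=> zL1 wL0; apply: contraTneq zL1 => ->; rewrite in_L1 wL0. Qed.

Lemma u_nle_sv : le u (s v) = false.
Proof.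
apply/negbTE/negP => u_le_sv.
suff : u = s u by move/eqP; rewrite eq_sym (negbTE su_neq).
apply: L0_separated => // z zL1.
have [->|zv] := eqVneq z v.
  by rewrite -[in RHS](s_inv v) (is_autP _ _ s_aut) u_le_v u_le_sv.
have [->|zsv] := eqVneq z (s v); first by rewrite (is_autP _ _ s_aut) u_le_sv u_le_v.
by rewrite -{2}(s_fixed (L1_neq_L0 zL1 uL0) zv (L1_neq_L0 zL1 suL0) zsv) (is_autP _ _ s_aut).
Qed.

Lemma u_matched_par : (forall t, t \in L1 -> le u t -> (t == v) || (t == s v)) ->
  matched le L1 true u v.
Proof.
move=> u_up z zL1; have [->|zv] := eqVneq z v; first by rewrite u_le_v.
apply/negbTE/negP => u_le_z; have /orP [/eqP zv'|/eqP zsv] := u_up _ zL1 u_le_z.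
- by rewrite zv' eqxx in zv.
- by rewrite zsv u_nle_sv in u_le_z.
Qed.

(* If u <= t but not u <= z, transposing t and z gives an a in L0 with a <= v and not
   a <= s v; such an a is fixed by s, which is absurd. *)
Lemma u_matched_crown t : t \in L1 -> t != v -> t != s v -> le u t ->
  matched le L1 false u (s v).
Proof.
move=> tL1 tv tsv u_le_t z zL1; have [->|zsv] := eqVneq z (s v); first by rewrite u_nle_sv.
have [->|zv] := eqVneq z v; first by rewrite u_le_v.
have [->|zt] := eqVneq z t; first by rewrite u_le_t.
apply/negPn/negP => u_nle_z.
have [a aL0 a_up] := L1_upsets_stable tL1 zL1 uL0.
have a_le_z : le a z by rewrite a_up // tpermR.
have a_le_v : le a v by rewrite a_up // tpermD.
have a_nle_sv : le a (s v) = false by rewrite a_up // tpermD // u_nle_sv.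
have au : a != u by apply: contraTneq a_le_z => ->.
have asu : a != s u.
  by apply: contraTneq a_le_v => ->; rewrite -[v]s_inv (is_autP _ _ s_aut) u_nle_sv.
have av : a != v by rewrite eq_sym L1_neq_L0.
have asv : a != s v by rewrite eq_sym L1_neq_L0.
by move: a_le_v; rewrite -(is_autP _ _ s_aut) (s_fixed au av asu asv) a_nle_sv.
Qed.

Lemma bip_iso_of_prime_symmetry :
  (exists n, 2 <= n /\ iso_sub [set: T] le [set: 'I_n * bool] (par_le n)) \/
  (exists n, 3 <= n /\ iso_sub [set: T] le [set: 'I_n * bool] (crown_le n)).
Proof.
case: (boolP [exists t, [&& t \in L1, t != v, t != s v & le u t]]) => [/existsP [t]|no_t].
- case/and4P=> tL1 tv tsv u_le_t; right.
  have [cardL1 iso] := bip_iso_of_matched uL0 svL1 (u_matched_crown tL1 tv tsv u_le_t) L0_separated.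
  exists #|L0|; split; last by apply: eq_iso_sub iso; apply: crown_leE.
  rewrite -cardL1; apply: leq_trans (subset_leq_card (_ : t |: [set v; s v] \subset L1)).
    by rewrite cardsU1 cards2 !inE (negbTE tv) (negbTE tsv) eq_sym sv_neq.
  by apply/subsetP => z; rewrite !inE => /orP [/eqP -> | /orP [] /eqP ->].
- left; have u_up w : w \in L1 -> le u w -> (w == v) || (w == s v).
    move=> wL1 u_le_w; apply: contraNT no_t; rewrite negb_or => /andP [wv wsv].
    by apply/existsP; exists w; rewrite wL1 wv wsv u_le_w.
  have [_ iso] := bip_iso_of_matched uL0 vL1 (u_matched_par u_up) L0_separated.
  exists #|L0|; split; last by apply: eq_iso_sub iso; apply: par_leE.
  apply: leq_trans (subset_leq_card (_ : [set u; s u] \subset L0)).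
    by rewrite cards2 eq_sym su_neq.
  by apply/subsetP => z; rewrite !inE => /orP [] /eqP ->.
Qed.

End PrimeSymmetry.

End Levels.

Lemma odot_C2_shape (T : finType) (le : rel T) (le_po : partial_order le) :
  in_odot_C2_C2 le ->
  (exists n, 2 <= n /\ iso_sub [set: T] le [set: 'I_n * bool] (par_le n)) \/
  (exists n, 3 <= n /\ iso_sub [set: T] le [set: 'I_n * bool] (crown_le n)).
Proof.
case=> [[g [_ g_classes grel]] not_C2].
have g_class b : g b \in Defs.classes (psymC2 le) by rewrite -g_classes imset_f ?inE.
have cover x : (x \in g false) || (x \in g true).
  have : [set y | `[< psymC2 le x y >]] \in [set g false; g true].
    by rewrite -imset_setT_bool g_classes imset_f.
  by rewrite !inE => /orP [] /eqP <-; rewrite inE; apply/orP; [left|right]; apply/asboolP/rt_refl.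
have class_psym b x y : x \in g b -> y \in g b -> psymC2 le x y.
  have /imsetP [z _ ->] := g_class b; rewrite !inE => /asboolP zx /asboolP zy.
  exact: rt_trans (psymC2_sym le_po zx) zy.
have top_nle_bot x y : x \in g true -> y \in g false -> le x y = false.
  move=> xt yf; apply/negP => xy.
  have : qle le (g true) (g false) by apply/exists_inP; exists x => //; apply/exists_inP; exists y.
  by rewrite -grel ?inE.
have /existsP [e /andP [ef /exists_inP [f ft e_le_f]]] : qle le (g false) (g true).
  by rewrite -grel ?inE.
have [[a [b [A [_ A_iso A_prime [s [[[s_aut [F QF]] _] _]]]]]]|no_step] :=
  EM (exists a b, pstepC2 le a b).
  have [u [v [u_lt_v F0 F1 s_inv Sigma_s]]] := C2_family_shape le_po s_aut QF.
  rewrite F0 F1 in Sigma_s.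
  exact (bip_iso_of_prime_symmetry le_po cover (class_psym false) (class_psym true)
    top_nle_bot ef ft e_le_f A_iso A_prime s_aut u_lt_v s_inv Sigma_s).
case: not_C2; apply: (iso_C2_of_no_pstep le_po cover (class_psym false) (class_psym true)
  top_nle_bot ef ft e_le_f) => x y xy.
by apply: no_step; exists x, y.
Qed.

Section BipPoset.
Variables (T : finType) (le : rel T).
Hypothesis le_po : partial_order le.
Variables (m : nat) (c : bool) (g : 'I_m.+2 * bool -> T) (h : T -> 'I_m.+2 * bool).
Hypotheses (ghK : cancel g h) (hgK : cancel h g).
Hypothesis g_le : forall v w, le (g v) (g w) = bip_le c m.+2 v w.

Let g_inj : injective g := can_inj ghK.

Lemma le_h x y : le x y = bip_le c m.+2 (h x) (h y).
Proof. by rewrite -g_le !hgK. Qed.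

Lemma le_gFT i j : le (g (i, false)) (g (j, true)) = (c == (i == j)).
Proof. by rewrite g_le bip_le_FT. Qed.

Definition level x := (h x).2.

Lemma level_g w : level (g w) = w.2.
Proof. by rewrite /level ghK. Qed.

Lemma g_neq_level v w : v.2 != w.2 -> g v != g w.
Proof. by apply: contraNneq => /g_inj ->. Qed.

Lemma le_neq_level x y : le x y -> x != y -> ~~ level x /\ level y.
Proof.
rewrite le_h /bip_le (can_eq hgK) => + xy; rewrite (negbTE xy) /=.
by case/and3P.
Qed.

Definition partner (i j : 'I_m.+2) := if c then i else j.

Lemma partnerP i j : i != j -> c == (i == partner i j) /\ ~~ (c == (j == partner i j)).
Proof.
move=> ij; rewrite /partner; case: c; rewrite !eqxx; split=> //.
by rewrite (eq_sym j) (negbTE ij).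
Qed.

Lemma partner_sym i j : tperm i j (partner i j) = partner j i.
Proof. by rewrite /partner; case: c; rewrite ?tpermL ?tpermR. Qed.

Lemma exists_neq (i : 'I_m.+2) : exists j, i != j.
Proof.
exists (if i == ord0 then Ordinal (isT : 1 < m.+2) else ord0).
by case: (eqVneq i ord0) => [->|].
Qed.

Lemma levelE x : level x = ~~ [exists y, Defs.ltP le x y].
Proof.
apply/idP/idP => [x_top|].
  apply/existsPn => y; apply/andP => -[xy /le_neq_level].
  by case/(_ xy); rewrite x_top.
apply: contraR; rewrite /level -{2}(hgK x); case: (h x) => i [] //= _.
have [j ij] := exists_neq i; apply/existsP; exists (g (partner i j, true)).
by rewrite /Defs.ltP g_neq_level //= le_gFT; case: (partnerP ij).
Qed.

Lemma level_aut r x : is_aut le r -> level (r x) = level x.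
Proof.
move=> r_aut; rewrite !levelE; congr (~~ _); apply/existsP/existsP => [[y]|[y]].
  by rewrite -{1}(permKV r y) (ltP_aut _ _ r_aut); exists (r^-1 y)%g.
by rewrite -(ltP_aut _ _ r_aut); exists (r y).
Qed.

Lemma ell_le2 (X : {set T}) : ell le X <= 2.
Proof.
apply/bigmax_leqP => C /andP [_ /forall_inP C_chain].
rewrite -card_bool; apply: (leq_card_in level) => x y xC yC xy_level.
apply/eqP/negP => /negP xy; have /forall_inP/(_ y yC)/orP := C_chain x xC.
case=> [/le_neq_level/(_ xy)|/le_neq_level]; last rewrite eq_sym => /(_ xy).
  by rewrite xy_level => -[/negP].
by rewrite xy_level => -[/negP].
Qed.

Definition swap_fun (i j : 'I_m.+2) x := g (tperm i j (h x).1, (h x).2).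

Lemma swap_fun_inj i j : injective (swap_fun i j).
Proof.
move=> x y /g_inj [/perm_inj e1 e2]; apply: (can_inj hgK).
by rewrite [h x]surjective_pairing [h y]surjective_pairing e1 e2.
Qed.

Definition swap i j : {perm T} := perm (@swap_fun_inj i j).

Lemma swapE i j k b : swap i j (g (k, b)) = g (tperm i j k, b).
Proof. by rewrite permE /swap_fun ghK. Qed.

Lemma swapC i j : swap j i = swap i j.
Proof. by apply/permP => x; rewrite !permE /swap_fun tpermC. Qed.

Lemma swap_aut i j : is_aut le (swap i j).
Proof.
apply/is_autP => x y; rewrite -(hgK x) -(hgK y).
case: (h x) (h y) => [k b] [k' b']; rewrite !swapE !g_le /bip_le /= !xpair_eqE.
by rewrite (inj_eq perm_inj).
Qed.

Definition edge i j := [set g (i, false); g (partner i j, true)].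

Lemma edge_iso k l : k != l -> iso_sub (edge k l) le [set: bool] c2le.
Proof.
move=> kl; exists (fun b => if b then g (partner k l, true) else g (k, false)); split.
- by move=> [] [] _ _ // /eqP; rewrite ?(negbTE (g_neq_level _)) // eq_sym (negbTE (g_neq_level _)).
- by rewrite imset_setT_bool.
- move=> [] [] _ _ /=; rewrite ?(po_refl le_po) ?g_le ?bip_le_FT //.
    by rewrite /bip_le xpair_eqE andbF.
  by case: (partnerP kl) => ->.
Qed.

Lemma swap_edge i j : [set swap i j x | x in edge i j] = edge j i.
Proof. by rewrite imset_set2 !swapE tpermL partner_sym. Qed.

Let edge_lt k l : k != l -> Defs.ltP le (g (k, false)) (g (partner k l, true)).
Proof. by move=> kl; rewrite /Defs.ltP g_neq_level // le_gFT; case: (partnerP kl). Qed.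

Let card_edge k l : #|edge k l| = 2.
Proof. by rewrite cards2 g_neq_level. Qed.

Let ell_edge k l : k != l -> ell le (edge k l) = 2.
Proof.
move=> kl; apply/anti_leq; rewrite ell_le2 -{1}(card_edge k l).
by rewrite chain_leq_ell // is_chain2 //; case/andP: (edge_lt kl).
Qed.

Section Swap.
Variables (i j : 'I_m.+2).
Hypothesis ij : i != j.

Let ji : j != i. Proof. by rewrite eq_sym. Qed.

Lemma Sigma_swap : Sigma (swap i j) = edge i j :|: edge j i.
Proof.
apply/setP => x; rewrite -(hgK x); case: (h x) => k b.
rewrite !inE swapE !(inj_eq g_inj) !xpair_eqE /partner /=.
case: tpermP => [->|->|/eqP ki /eqP kj]; last first.
  by case: b; case: c; rewrite ?eqxx ?(negbTE ki) ?(negbTE kj) /= ?orbF.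
all: by case: b; case: c; rewrite ?eqxx ?(negbTE ij) ?(negbTE ji) /= ?orbF.
Qed.

Let ell_Sigma : ell le (Sigma (swap i j)) = 2.
Proof.
apply/anti_leq; rewrite ell_le2 -(ell_edge ij) /= Sigma_swap.
apply/bigmax_leqP => C /andP [CX C_chain]; apply: chain_leq_ell C_chain.
exact: subset_trans CX (subsetUl _ _).
Qed.

Definition swap_family (k : nat) := if k == 0 then edge i j else edge j i.

Lemma swap_QFam : QFamC2 le (swap i j) swap_family.
Proof.
have family : gen_family le (swap i j) 2 swap_family.
  split=> [k _||k _|].
  - rewrite /swap_family; case: ifP => _; apply: max_ordered_pair;
      rewrite ?Sigma_swap ?subsetUl ?subsetUr ?card_edge //; exact/npairs_set2_gt0/edge_lt.
  - by case=> [|[|//]] _; rewrite /swap_family /= ?swap_edge // -swapC swap_edge.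
  - by rewrite ell_Sigma /swap_family; case: ifP; rewrite ell_edge.
  - by rewrite bigcup_ord2 Sigma_swap.
split=> // [k _|G [_ _ ellG _] k k2].
  by rewrite /swap_family; case: ifP => _; apply: edge_iso.
by rewrite /swap_family; case: ifP => _; rewrite card_edge -ell_Sigma -(ellG k k2) ell_leq_card.
Qed.

Lemma swap_generator : generator le c2le [set: bool] 2 (swap i j).
Proof. by split; [exact: swap_aut|exists swap_family; exact: swap_QFam]. Qed.

Lemma swap_step b : step_byC2 le (swap i j) (g (i, b)) (g (j, b)).
Proof.
exists swap_family; split; first exact: swap_QFam.
have edges_neq : edge i j != edge j i.
  apply/negP => /eqP /setP /(_ (g (i, false))).
  by rewrite !inE !(inj_eq g_inj) !xpair_eqE eqxx (negbTE ij) /= andbF.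
have edges_neq' : edge j i != edge i j by rewrite eq_sym.
case: b; last first.
  exists 0, 1, 1; rewrite expg1 swapE tpermL /swap_family /= edges_neq.
  by rewrite !inE !eqxx ?orbT.
case: (boolP c) => [c_true|/negbTE c_false].
- exists 0, 1, 1; rewrite expg1 swapE tpermL /swap_family /= edges_neq.
  by rewrite /edge /partner c_true !inE !eqxx ?orbT.
- exists 1, 0, 1; rewrite expg1 swapE tpermL /swap_family /= edges_neq'.
  by rewrite /edge /partner c_false !inE !eqxx ?orbT.
Qed.

End Swap.

Lemma sym_of_level x y : level x = level y -> symC2 le x y.
Proof.
rewrite -(hgK x) -(hgK y) !level_g; case: (h x) (h y) => [i b] [j b'] /= <-.
have [<-|ij] := eqVneq i j; first exact: rt_refl.
by apply: rt_step; exists (swap i j); split; [exact: swap_generator|exact: swap_step].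
Qed.

Lemma ell_Sigma_moved t b : is_aut le t -> t b != b -> 1 < ell le (Sigma t).
Proof.
move=> t_aut tb.
suff [x [y [tx ty x_le_y xy]]] : exists x y, [/\ t x != x, t y != y, le x y & x != y].
  apply: leq_trans (chain_leq_ell (_ : [set x; y] \subset Sigma t) (is_chain2 le_po x_le_y)).
    by rewrite cards2 xy.
  by apply/subsetP => z; rewrite !inE => /orP [] /eqP ->.
move: tb; rewrite -(hgK b); case: (h b) => k lb tb.
have tE : t (g (k, lb)) = g ((h (t (g (k, lb)))).1, lb).
  rewrite -{1}(hgK (t (g (k, lb)))) [h _]surjective_pairing; congr (g (_, _)).
  by rewrite -/(level _) level_aut // level_g.
move: tE tb; set k' := (h _).1 => tE tb; clearbody k'.
have kk' : k != k' by apply: contraNneq tb => e; rewrite tE -e.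
have [le_p nle_p] := partnerP kk'.
case: lb tE tb => tE tb.
- exists (g (partner k k', false)), (g (k, true)); split=> //.
  + apply: (aut_moved_below t_aut (_ : le _ (g (k, true))));
      by rewrite ?tE le_gFT (eq_sym (partner k k')).
  + by rewrite le_gFT (eq_sym (partner k k')).
  + by rewrite g_neq_level.
- exists (g (k, false)), (g (partner k k', true)); split=> //.
  + by apply: (aut_moved_above t_aut (_ : le (g (k, false)) _)); rewrite ?tE le_gFT.
  + by rewrite le_gFT.
  + by rewrite g_neq_level.
Qed.

Lemma not_composite A : ~ composite le c2le [set: bool] 2 A.
Proof.
move=> [DQ [r [A' [/andP [r2 _] _ [b [g0 [g0_gen g0b]]] _ DQ_small]]]].
have DQ1 : #|DQ| <= 1.
  case: DQ_small => [/proper_card|[_ r_lt2]]; last by rewrite ltnNge r2 in r_lt2.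
  by rewrite cardsT card_bool.
move/negP: g0b; apply; apply/eqP; apply: in_gen_fixed g0_gen => t.
move=> [[t_aut [F [[_ _ ellF cupF] isoF _]]] _]; apply/eqP/negPn/negP => tb.
have : b \in Sigma t by rewrite inE.
rewrite -cupF => /bigcupP [k _ bF].
have [g' [_ gF _]] := isoF k (ltn_ord k).
have := ell_Sigma_moved t_aut tb; rewrite -(ellF k (ltn_ord k)) ltnNge => /negP; apply.
by rewrite (leq_trans (ell_leq_card _ _)) // -gF (leq_trans (leq_imset_card _ _)).
Qed.

Lemma linked_any A : linked le A.
Proof.
apply/forall_inP => x _; apply/forall_inP => y _; apply/implyP => xy.
rewrite /covers xy; apply/orP; left; apply/forallP => z; apply/andP => -[xz zy].
have [_ z_top] := le_neq_level (proj2 (andP xz)) (proj1 (andP xz)).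
have [z_bot _] := le_neq_level (proj2 (andP zy)) (proj1 (andP zy)).
by rewrite z_top in z_bot.
Qed.

Lemma pstep_of_level x y : level x = level y -> x != y -> pstepC2 le x y.
Proof.
rewrite -(hgK x) -(hgK y) !level_g; case: (h x) (h y) => [i b] [j b'] /= <- xy.
have ij : i != j by apply: contraNneq xy => ->.
exists (edge i j); split; [exact: linked_any|exact: edge_iso|exact: not_composite|].
exists (swap i j); split; last exact: swap_step.
split=> [|z z_asym]; first exact: swap_generator.
pose w := if level z then g (partner i j, true) else g (i, false).
have wE : w \in edge i j by rewrite /w; case: (level z); rewrite !inE eqxx ?orbT.
by case: (z_asym w wE); apply: sym_of_level; rewrite /w; case: (level z); rewrite level_g.
Qed.

Lemma psymE x y : psymC2 le x y <-> level x = level y.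
Proof.
split=> [/(psymC2_aut le_po) [r r_aut <-]|xy]; first by rewrite level_aut.
have [<-|x_neq_y] := eqVneq x y; first exact: rt_refl.
by apply: rt_step; apply: pstep_of_level.
Qed.

Let level_set b := [set y | level y == b].

Lemma classes_level : Defs.classes (psymC2 le) = [set level_set b | b in [set: bool]].
Proof.
apply/setP => Y; apply/imsetP/imsetP => [[x _ ->]|[b _ ->]].
  exists (level x) => //; apply/setP => y; rewrite !inE.
  by apply/asboolP/eqP => [/psymE|yx]; [move->|apply/psymE].
exists (g (ord0, b)) => //; apply/setP => y; rewrite !inE.
by apply/eqP/asboolP => [<-|/psymE <-]; [apply/psymE|]; rewrite level_g.
Qed.

Lemma qle_level v w : c2le v w = qle le (level_set v) (level_set w).
Proof.
have [j j_neq] := exists_neq ord0.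
case: v; case: w; apply/esym; rewrite /c2le /qle.
- apply/exists_inP; exists (g (ord0, true)); rewrite ?inE ?level_g //.
  by apply/exists_inP; exists (g (ord0, true)); rewrite ?inE ?level_g ?(po_refl le_po).
- apply/negbTE/negP => /exists_inP [x]; rewrite inE => /eqP x_top.
  move=> /exists_inP [y]; rewrite inE => /eqP y_bot.
  have [exy|xy /le_neq_level /(_ xy) []] := eqVneq x y; first by move: x_top; rewrite exy y_bot.
  by rewrite x_top.
- apply/exists_inP; exists (g (ord0, false)); rewrite ?inE ?level_g //.
  apply/exists_inP; exists (g (partner ord0 j, true)); rewrite ?inE ?level_g // le_gFT.
  by case: (partnerP j_neq).
- apply/exists_inP; exists (g (ord0, false)); rewrite ?inE ?level_g //.
  by apply/exists_inP; exists (g (ord0, false)); rewrite ?inE ?level_g ?(po_refl le_po).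
Qed.

Lemma bip_in_odot : in_odot_C2_C2 le.
Proof.
split.
  exists level_set; split; last by move=> v w _ _; apply: qle_level.
  + move=> b b' _ _ /setP /(_ (g (ord0, b))); rewrite !inE level_g eqxx.
    by move/esym/eqP.
  + by rewrite classes_level.
move=> [g' [_ g'T _]].
have card_T : #|T| <= 2.
  by rewrite -cardsT -g'T (leq_trans (leq_imset_card _ _)) // cardsT card_bool.
by have := leq_trans (leq_card g g_inj) card_T; rewrite card_prod card_ord card_bool muln2.
Qed.

End BipPoset.

Lemma iso_bip_in_odot (T : finType) (le : rel T) (le_po : partial_order le) m c :
  iso_sub [set: T] le [set: 'I_m.+2 * bool] (bip_le c m.+2) -> in_odot_C2_C2 le.
Proof.
move=> [g [g_inj gT g_le]].
have g_onto x : exists w, g w = x.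
  have : x \in g @: [set: _] by rewrite gT inE.
  by case/imsetP => w _ ->; exists w.
have [h hK] := fin_all_exists g_onto.
have gK : cancel g h by move=> w; apply: g_inj; rewrite ?inE ?hK.
by apply: (@bip_in_odot _ _ le_po m c g h gK hK) => v w; rewrite g_le ?inE.
Qed.

Theorem mainTheorem7 (T : finType) (le : rel T) (Hpo : partial_order le) :
  in_odot_C2_C2 le <->
  ((exists n : nat, 2 <= n /\ iso_sub [set: T] le [set: ('I_n * bool)%type] (par_le n)) \/
   (exists n : nat, 3 <= n /\ iso_sub [set: T] le [set: ('I_n * bool)%type] (crown_le n))).
Proof.
split; first exact: odot_C2_shape.
case=> -[[|[|m]] [n_ge iso]] //.
- by apply: (@iso_bip_in_odot _ _ Hpo m true); apply: eq_iso_sub iso => v w; rewrite par_leE.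
- by apply: (@iso_bip_in_odot _ _ Hpo m false); apply: eq_iso_sub iso => v w; rewrite crown_leE.
Qed.
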